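(* Let $k$ be an algebraically closed field and $G$ a finite abelian group whose order is invertible in $k$. For any finite-dimensional $k$-algebra $\Lambda$ with a $G$-action, there is an isomorphism of algebras $\mathrm{Triv}(\Lambda G)\simeq\mathrm{Triv}(\Lambda)G$.
   Context: A $G$-action on $\Lambda$ is a left action by algebra automorphisms. The skew group algebra $\Lambda G$ is $\Lambda\otimes_k kG$ with multiplication $(\lambda\otimes g)(\mu\otimes h)=\lambda(g\cdot\mu)\otimes gh$. For an algebra $A$, $DA=\mathrm{Hom}_k(A,k)$ with its natural $A$-$A$-bimodule structure, and the trivial extension is $\mathrm{Triv}(A)=A\oplus DA$ with $(a,\phi)(b,\psi)=(ab,a\psi+\phi b)$. $G$ acts on $D\Lambda$ by $(g\cdot\phi)(b)=\phi(g^{-1}\cdot b)$ and on $\mathrm{Triv}(\Lambda)$ by $g\cdot(a,\phi)=(g\cdot a,g\cdot\phi)$; this is an action by algebra automorphisms, so $\mathrm{Triv}(\Lambda)G$ is defined. *)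

From HB Require Import structures.
From mathcomp Require Import all_boot all_algebra all_fingroup all_field.
Set Implicit Arguments. Unset Strict Implicit. Unset Printing Implicit Defensive.
Import GRing.Theory.
Local Open Scope ring_scope.

Definition is_alg_action (k : fieldType) (gT : finGroupType) (L : falgType k)
    (act : gT -> L -> L) : Prop :=
  [/\ forall g (a : k) (x y : L), act g (a *: x + y) = a *: act g x + act g y,
      forall g (x y : L), act g (x * y) = act g x * act g y,
      forall g, act g 1 = 1,
      forall x, act 1%g x = x
    & forall g h x, act (g * h)%g x = act g (act h x)].

(* Skew group algebra A G, carrier {ffun gT -> A}: x = \sum_g x g (x) g.
   (x * y)(h) = \sum_g x g * (g . y (g^-1 h)), i.e.
   (l (x) g)(m (x) h) = l (g . m) (x) gh. *)
Definition skew_mul (gT : finGroupType) (A : zmodType) (mulA : A -> A -> A)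
    (act : gT -> A -> A) (x y : {ffun gT -> A}) : {ffun gT -> A} :=
  [ffun h => \sum_(g : gT) mulA (x g) (act g (y (g^-1 * h)%g))].

Definition skew_one (gT : finGroupType) (A : zmodType) (oneA : A)
    : {ffun gT -> A} :=
  [ffun g => if g == 1%g then oneA else 0].

Notation dual k A := ('Hom(A, (k : fieldType)^o)).

(* Trivial extension Triv(A) = A (+) DA, carrier A * DA, with
   (a, phi)(b, psi) = (ab, a psi + phi b), where
   (a psi)(x) = psi (x a) and (phi b)(x) = phi (b x). *)
Definition triv_mul (k : fieldType) (A : vectType k) (mulA : A -> A -> A)
    (u v : A * dual k A) : A * dual k A :=
  (mulA u.1 v.1,
   linfun (fun x : A => v.2 (mulA x u.1)) + linfun (fun x : A => u.2 (mulA v.1 x))).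

Definition triv_one (k : fieldType) (A : vectType k) (oneA : A) : A * dual k A :=
  (oneA, 0).

Definition triv_act (k : fieldType) (gT : finGroupType) (L : falgType k)
    (act : gT -> L -> L) (g : gT) (u : L * dual k L) : L * dual k L :=
  (act g u.1, linfun (fun b : L => u.2 (act g^-1%g b))).

Definition TrivSkew (k : fieldType) (gT : finGroupType) (L : falgType k) :=
  ({ffun gT -> L} * dual k {ffun gT -> L})%type.
Definition trivskew_mul (k : fieldType) (gT : finGroupType) (L : falgType k)
    (act : gT -> L -> L) : TrivSkew gT L -> TrivSkew gT L -> TrivSkew gT L :=
  triv_mul (skew_mul (@GRing.mul L) act).
Definition trivskew_one (k : fieldType) (gT : finGroupType) (L : falgType k)
    : TrivSkew gT L := triv_one (skew_one gT (1 : L)).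

Definition SkewTriv (k : fieldType) (gT : finGroupType) (L : falgType k) :=
  {ffun gT -> (L * dual k L)%type}.
Definition skewtriv_mul (k : fieldType) (gT : finGroupType) (L : falgType k)
    (act : gT -> L -> L) : SkewTriv gT L -> SkewTriv gT L -> SkewTriv gT L :=
  skew_mul (triv_mul (@GRing.mul L)) (triv_act act).
Definition skewtriv_one (k : fieldType) (gT : finGroupType) (L : falgType k)
    : SkewTriv gT L := skew_one gT (triv_one (1 : L)).

Definition alg_iso (k : fieldType) (V W : lmodType k)
    (mulV : V -> V -> V) (oneV : V) (mulW : W -> W -> W) (oneW : W)
    (f : V -> W) : Prop :=
  [/\ forall (a : k) (x y : V), f (a *: x + y) = a *: f x + f y,
      bijective f,
      forall x y, f (mulV x y) = mulW (f x) (f y)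
    & f oneV = oneW].

From HB Require Import structures.
From mathcomp Require Import all_boot all_algebra all_fingroup all_field.
Import GRing.Theory.
Set Implicit Arguments. Unset Strict Implicit. Unset Printing Implicit Defensive.
Local Open Scope ring_scope.

(* As vector spaces, Triv(LG) = LG (+) D(LG) and Triv(L)G = LG (+) (DL)G, and in
   both algebras the first summand multiplies the second through a bimodule
   structure while the second summand squares to zero. The pairing
   <phi (x) h, l (x) g> = [g h = 1] phi (h . l) identifies (DL)G with D(LG) as
   LG-bimodules, so the identity of LG together with this identification is an
   algebra isomorphism. *)

Lemma linfun_linearE (K : fieldType) (aT rT : vectType K) (f : aT -> rT) :
  linear f -> linfun f =1 f.
Proof.
by move=> f_lin; exact: (lfunE (HB.pack f (GRing.isLinear.Build K aT rT *:%R f f_lin))).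
Qed.

Lemma linfun_compE (K : fieldType) (U V W : vectType K) (psi : 'Hom(V, W))
    (f : U -> V) :
  linear f -> linfun (fun x => psi (f x)) =1 (fun x => psi (f x)).
Proof. by move=> f_lin; apply: linfun_linearE => a x y; rewrite f_lin linearP. Qed.

Lemma eq_mulVg_mulgV (gT : finGroupType) (x y z : gT) :
  ((x^-1 * y)%g == z) = (x == (y * z^-1)%g).
Proof.
apply/eqP/eqP => [<-|->]; first by rewrite invMg invgK mulKVg.
by rewrite invMg invgK mulgKV.
Qed.

Section TrivialExtensionSkewGroupAlgebra.
Variables (k : fieldType) (gT : finGroupType) (L : falgType k) (act : gT -> L -> L).
Hypothesis act_is_alg_action : is_alg_action act.

Lemma act_linear g : linear (act g).
Proof. by case: act_is_alg_action => act_lin _ _ _ _; exact: act_lin. Qed.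

Lemma act0 g : act g 0 = 0.
Proof.
exact: raddf0 (HB.pack (act g) (GRing.isLinear.Build k L L *:%R (act g) (act_linear g))).
Qed.

Lemma act_mulr g x y : act g (x * y) = act g x * act g y.
Proof. by case: act_is_alg_action. Qed.

Lemma act1g x : act 1%g x = x.
Proof. by case: act_is_alg_action. Qed.

Lemma act_mulg g h x : act (g * h)%g x = act g (act h x).
Proof. by case: act_is_alg_action. Qed.

Lemma act_invKV g x : act g (act g^-1 x) = x.
Proof. by rewrite -act_mulg mulgV act1g. Qed.

(* [delta g l] is the element [l (x) g] of the skew group algebra. *)
Definition delta (g : gT) (l : L) : {ffun gT -> L} :=
  [ffun h => if h == g then l else 0].

Lemma delta_linear g : linear (delta g).
Proof.
by move=> a x y; apply/ffunP => h; rewrite !ffunE; case: eqP; rewrite ?scaler0 ?addr0.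
Qed.

Lemma sum_delta (F : gT -> L) : \sum_g delta g (F g) = [ffun h => F h].
Proof.
apply/ffunP => h; rewrite sum_ffunE ffunE (bigD1 h) //= big1 ?addr0 ?ffunE ?eqxx //.
by move=> g /negbTE ng; rewrite ffunE eq_sym ng.
Qed.

Local Notation skew_mulL := (skew_mul (@GRing.mul L) act).

Lemma skew_mul_linearl z : linear (skew_mulL ^~ z).
Proof.
move=> a x y; apply/ffunP => h; rewrite !ffunE scaler_sumr -big_split /=.
by apply: eq_bigr => g _; rewrite !ffunE mulrDl scalerAl.
Qed.

Lemma skew_mul_linearr z : linear (skew_mulL z).
Proof.
move=> a x y; apply/ffunP => h; rewrite !ffunE scaler_sumr -big_split /=.
by apply: eq_bigr => g _; rewrite !ffunE act_linear mulrDr scalerAr.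
Qed.

Lemma skew_mul_deltal g m x :
  skew_mulL (delta g m) x = [ffun h => m * act g (x (g^-1 * h)%g)].
Proof.
apply/ffunP => h; rewrite !ffunE (bigD1 g) //= big1 ?addr0 ?ffunE ?eqxx //.
by move=> i /negbTE ni; rewrite ffunE ni mul0r.
Qed.

Lemma skew_mul_deltar g m y :
  skew_mulL y (delta g m) = [ffun h => y (h * g^-1)%g * act (h * g^-1)%g m].
Proof.
apply/ffunP => h; rewrite !ffunE (bigD1 (h * g^-1)%g) //= big1 ?addr0 ?ffunE.
  by rewrite eq_mulVg_mulgV eqxx.
by move=> i /negbTE ni; rewrite ffunE eq_mulVg_mulgV ni act0 mulr0.
Qed.

(* The coordinates of [Phi] under the pairing: [Phi = \sum_h dual_coord Phi h (x) h]. *)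
Definition dual_coord (Phi : dual k {ffun gT -> L}) (h : gT) : dual k L :=
  linfun (fun mu => Phi (delta h^-1 (act h^-1 mu))).

Definition dual_of_coords (u : gT -> dual k L) : dual k {ffun gT -> L} :=
  linfun (fun x : {ffun gT -> L} => \sum_h u h (act h (x h^-1%g))).

Lemma dual_coordE Phi h mu : dual_coord Phi h mu = Phi (delta h^-1 (act h^-1 mu)).
Proof. by apply: linfun_compE => a x y; rewrite act_linear delta_linear. Qed.

Lemma dual_of_coordsE u x : dual_of_coords u x = \sum_h u h (act h (x h^-1%g)).
Proof.
apply: linfun_linearE => a y z; rewrite scaler_sumr -big_split /=.
by apply: eq_bigr => h _; rewrite !ffunE act_linear linearP.
Qed.

Lemma dual_coordP a Phi Psi h :
  dual_coord (a *: Phi + Psi) h = a *: dual_coord Phi h + dual_coord Psi h.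
Proof.
by apply/lfunP => mu; rewrite add_lfunE scale_lfunE !dual_coordE add_lfunE scale_lfunE.
Qed.

Lemma dual_coordD Phi Psi h :
  dual_coord (Phi + Psi) h = dual_coord Phi h + dual_coord Psi h.
Proof. by apply/lfunP => mu; rewrite add_lfunE !dual_coordE add_lfunE. Qed.

Lemma sum_dual_coord Phi (F : gT -> L) :
  \sum_g dual_coord Phi g (F g) = Phi [ffun h => act h (F h^-1%g)].
Proof.
under eq_bigr => g _ do rewrite dual_coordE.
rewrite -linear_sum (reindex_inj invg_inj) /=.
by under eq_bigr => h _ do rewrite invgK; rewrite sum_delta.
Qed.

Lemma dual_of_coords_delta u g m : dual_of_coords u (delta g m) = u g^-1%g (act g^-1%g m).
Proof.
rewrite dual_of_coordsE (bigD1 g^-1%g) //= big1 ?addr0 ?ffunE ?invgK ?eqxx //.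
by move=> h nh; rewrite ffunE -{1}[g]invgK (inj_eq invg_inj) (negbTE nh) act0 linear0.
Qed.

Lemma dual_coord_lmul (Psi : dual k {ffun gT -> L}) (x : {ffun gT -> L}) h mu :
  dual_coord (linfun (fun z => Psi (skew_mulL z x))) h mu
  = \sum_g dual_coord Psi (g^-1 * h)%g (act g^-1 (mu * x g)).
Proof.
rewrite dual_coordE linfun_compE; last exact: skew_mul_linearl.
rewrite (reindex_inj (inj_comp (mulgI h) invg_inj)) /=.
under eq_bigr => g _ do rewrite invMg invgK mulgKV.
rewrite sum_dual_coord skew_mul_deltal; congr (Psi _); apply/ffunP => j.
by rewrite !ffunE !invgK -act_mulg mulKVg act_mulr.
Qed.

Lemma dual_coord_rmul (Phi : dual k {ffun gT -> L}) (y : {ffun gT -> L}) h mu :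
  dual_coord (linfun (fun z => Phi (skew_mulL y z))) h mu
  = \sum_g dual_coord Phi g (act g (y (g^-1 * h)%g) * mu).
Proof.
rewrite dual_coordE linfun_compE; last exact: skew_mul_linearr.
rewrite sum_dual_coord skew_mul_deltar; congr (Phi _); apply/ffunP => j.
by rewrite !ffunE !invgK act_mulr act_invKV -act_mulg mulgK.
Qed.

Definition triv_skew (X : TrivSkew gT L) : SkewTriv gT L :=
  [ffun h => (X.1 h, dual_coord X.2 h)].

Definition triv_skew_inv (u : SkewTriv gT L) : TrivSkew gT L :=
  ([ffun h => (u h).1], dual_of_coords (fun h => (u h).2)).

Lemma triv_skew_linear : linear triv_skew.
Proof.
move=> a X Y; apply/ffunP => h; rewrite !ffunE.
by apply: injective_projections; rewrite /= ?ffunE ?dual_coordP.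
Qed.

Lemma triv_skewK : cancel triv_skew triv_skew_inv.
Proof.
case=> x Phi; apply: injective_projections => /=; first by apply/ffunP => h; rewrite !ffunE.
apply/lfunP => y; rewrite dual_of_coordsE.
under eq_bigr => h _ do rewrite ffunE /=.
rewrite sum_dual_coord; congr (Phi _); apply/ffunP => h.
by rewrite !ffunE invgK act_invKV.
Qed.

Lemma triv_skew_invK : cancel triv_skew_inv triv_skew.
Proof.
move=> u; apply/ffunP => h; rewrite ffunE [RHS]surjective_pairing.
apply: injective_projections => /=; first by rewrite ffunE.
by apply/lfunP => mu; rewrite dual_coordE dual_of_coords_delta invgK act_invKV.
Qed.

Lemma triv_skewM X Y :
  triv_skew (trivskew_mul act X Y) = skewtriv_mul act (triv_skew X) (triv_skew Y).
Proof.
case: X => x Phi; case: Y => y Psi; apply/ffunP => h.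
rewrite /skewtriv_mul /skew_mul !ffunE; apply: injective_projections => /=.
  by rewrite raddf_sum; apply: eq_bigr => g _; rewrite !ffunE.
apply/lfunP => mu; rewrite raddf_sum sum_lfunE dual_coordD add_lfunE.
rewrite dual_coord_lmul dual_coord_rmul -big_split; apply: eq_bigr => g _ /=.
rewrite !ffunE /= add_lfunE; congr (_ + _).
  rewrite [RHS]linfun_compE; last by move=> a u v; rewrite mulrDl scalerAl.
  by rewrite [RHS]linfun_compE; last exact: act_linear.
by rewrite [RHS]linfun_compE; last by move=> a u v; rewrite mulrDr scalerAr.
Qed.

Lemma triv_skew1 : triv_skew (trivskew_one gT L) = skewtriv_one gT L.
Proof.
apply/ffunP => h; rewrite !ffunE; apply: injective_projections => /=; rewrite ?ffunE.
  by case: eqP.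
by apply/lfunP => mu; rewrite dual_coordE !zero_lfunE; case: eqP; rewrite /= zero_lfunE.
Qed.

End TrivialExtensionSkewGroupAlgebra.

Theorem proposition1p4 (k : closedFieldType) (gT : finGroupType)
    (L : falgType k) (act : gT -> L -> L) :
  abelian [set: gT] ->
  (#|gT|%:R : k) \is a GRing.unit ->
  is_alg_action act ->
  exists f : TrivSkew gT L -> SkewTriv gT L,
    alg_iso (trivskew_mul act) (trivskew_one gT L)
            (skewtriv_mul act) (skewtriv_one gT L) f.
Proof.
move=> _ _ act_is_alg_action; exists (triv_skew act); split.
- exact: triv_skew_linear.
- exists (triv_skew_inv act); [exact: triv_skewK | exact: triv_skew_invK].
- exact: triv_skewM.
- exact: triv_skew1.
Qed.
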